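(* Let $\mathcal V,\mathcal W$ be operator spaces, let $\mathcal D\subseteq\mathcal V_{\rm nc}$ be a finitely open noncommutative set and $\mathcal E\subseteq\mathcal W_{\rm nc}$ a noncommutative set, and let $f\colon\mathcal D\to\mathcal E$ be a locally bounded noncommutative function. Then $\delta_{\mathcal E}(f(a),f(c))(\Delta f(a,c)(b))\le\delta_{\mathcal D}(a,c)(b)$ for all $m,n\in\mathbb N$, $a\in\mathcal D_n$, $c\in\mathcal D_m$, $b\in\mathcal V^{n\times m}$.
   Context: A noncommutative set is a family $\mathcal D=(\mathcal D_n)$, $\mathcal D_n\subseteq\mathcal V^{n\times n}$, closed under direct sums $a\oplus c=\begin{bmatrix}a&0\\0&c\end{bmatrix}$. It is finitely open if for each $n$ the intersection of $\mathcal D_n$ with any finite-dimensional subspace of $\mathcal V^{n\times n}$ is open in that subspace. A noncommutative function $f\colon\mathcal D\to\mathcal E$ maps $\mathcal D_n$ into $\mathcal E_n$ and respects intertwinings by scalar matrices: $aS=Sb\Rightarrow f(a)S=Sf(b)$ for $a\in\mathcal D_m,b\in\mathcal D_n,S\in\mathbb C^{m\times n}$. $\Delta f(a,c)\colon\mathcal V^{n\times m}\to\mathcal W^{n\times m}$ denotes the (linear) difference-differential of $f$, determined by $f\Big(\begin{bmatrix}a&b\\0&c\end{bmatrix}\Big)=\begin{bmatrix}f(a)&\Delta f(a,c)(b)\\0&f(c)\end{bmatrix}$ whenever the block matrix lies in $\mathcal D_{n+m}$. For $a\in\mathcal D_n,c\in\mathcal D_m,b\in\mathcal V^{n\times m}$,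 $\delta_{\mathcal D}(a,c)(b)=\big[\sup\{t\in[0,+\infty]\colon\begin{bmatrix}a&sb\\0&c\end{bmatrix}\in\mathcal D_{n+m}\ \forall s\in[0,t]\}\big]^{-1}\in[0,+\infty]$ ($1/0=+\infty$, $1/\infty=0$); similarly for $\mathcal E$. *)

From HB Require Import structures.
From mathcomp Require Import all_boot all_order all_algebra.
From mathcomp Require Import boolp classical_sets reals constructive_ereal ereal.
From mathcomp Require Import complex.
From Stdlib Require Import ClassicalEpsilon.

Set Implicit Arguments.
Unset Strict Implicit.
Unset Printing Implicit Defensive.

Import Order.TTheory GRing.Theory Num.Theory.
Local Open Scope ring_scope.

Definition cabs (R : realType) (z : R[i]) : R :=
  Num.sqrt (complex.Re z ^+ 2 + complex.Im z ^+ 2).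

Definition vnorm2 (R : realType) n (v : 'cV[R[i]]_n) : R :=
  Num.sqrt (\sum_i cabs (v i 0) ^+ 2).

Definition opnorm (R : realType) m n (A : 'M[R[i]]_(m, n)) : R :=
  sup [set vnorm2 (A *m v) | v in [set v : 'cV[R[i]]_n | vnorm2 v <= 1]].

Definition mxscale (R : realType) (V : lmodType R[i]) p q
  (l : R[i]) (x : 'M[V]_(p, q)) : 'M[V]_(p, q) := map_mx (fun v => l *: v) x.

Definition smx (R : realType) (V : lmodType R[i]) p q r
  (S : 'M[R[i]]_(p, q)) (x : 'M[V]_(q, r)) : 'M[V]_(p, r) :=
  \matrix_(i, j) \sum_k (S i k *: x k j).

Definition mxs (R : realType) (V : lmodType R[i]) p q r
  (x : 'M[V]_(p, q)) (S : 'M[R[i]]_(q, r)) : 'M[V]_(p, r) :=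
  \matrix_(i, j) \sum_k (S k j *: x i k).

Definition dsum (V : zmodType) n m (a : 'M[V]_n) (c : 'M[V]_m) : 'M[V]_(n + m) :=
  block_mx a 0 0 c.

(* Abstract operator space structure (Ruan's axioms): a norm on each
   M_n(V) such that
   (R1) ||alpha x beta||_m <= ||alpha|| ||x||_n ||beta||,
   (R2) ||x (+) y||_{n+m} = max(||x||_n, ||y||_m). *)
Definition is_operator_space (R : realType) (V : lmodType R[i])
  (nrm : forall n, 'M[V]_n -> R) : Prop :=
  [/\ (forall n (x : 'M[V]_n), nrm n x = 0 -> x = 0),
      (forall n (l : R[i]) (x : 'M[V]_n), nrm n (mxscale l x) = cabs l * nrm n x),
      (forall n (x y : 'M[V]_n), nrm n (x + y) <= nrm n x + nrm n y),
      (forall n m (x : 'M[V]_n) (y : 'M[V]_m),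
          nrm (n + m)%N (dsum x y) = Num.max (nrm n x) (nrm m y)) &
      (forall m n (al : 'M[R[i]]_(m, n)) (x : 'M[V]_n) (be : 'M[R[i]]_(n, m)),
          nrm m (mxs (smx al x) be) <= opnorm al * nrm n x * opnorm be)].

Definition nc_set (V : zmodType) (D : forall n, set 'M[V]_n) : Prop :=
  forall n m (a : 'M[V]_n) (c : 'M[V]_m), D n a -> D m c -> D (n + m)%N (dsum a c).

Definition span_mx (R : realType) (V : lmodType R[i]) n
  (s : seq 'M[V]_n) : set 'M[V]_n :=
  [set x | exists cs : seq R[i], size cs = size s /\
     x = \sum_(i < size s) mxscale (nth 0 cs i) (nth 0 s i)].

(* Finitely open: the intersection of D_n with any finite-dimensional
   subspace U of V^{n x n} is open in U. *)
Definition finitely_open (R : realType) (V : lmodType R[i])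
  (nrm : forall n, 'M[V]_n -> R) (D : forall n, set 'M[V]_n) : Prop :=
  forall n (s : seq 'M[V]_n) (x : 'M[V]_n),
    span_mx s x -> D n x ->
    exists eps : R, 0 < eps /\
      forall y, span_mx s y -> nrm n (y - x) < eps -> D n y.

Definition nc_fun (R : realType) (V W : lmodType R[i])
  (D : forall n, set 'M[V]_n) (E : forall n, set 'M[W]_n)
  (f : forall n, 'M[V]_n -> 'M[W]_n) : Prop :=
  (forall n x, D n x -> E n (f n x)) /\
  (forall m n (a : 'M[V]_m) (b : 'M[V]_n) (S : 'M[R[i]]_(m, n)),
      D m a -> D n b -> mxs a S = smx S b -> mxs (f m a) S = smx S (f n b)).

Definition locally_bounded (R : realType) (V W : lmodType R[i])
  (nV : forall n, 'M[V]_n -> R) (nW : forall n, 'M[W]_n -> R)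
  (D : forall n, set 'M[V]_n) (f : forall n, 'M[V]_n -> 'M[W]_n) : Prop :=
  forall n (a : 'M[V]_n), D n a ->
    exists r M : R, 0 < r /\
      forall x, D n x -> nV n (x - a) < r -> nW n (f n x) <= M.

Definition is_Delta (R : realType) (V W : lmodType R[i])
  (D : forall n, set 'M[V]_n) (f : forall n, 'M[V]_n -> 'M[W]_n)
  n m (a : 'M[V]_n) (c : 'M[V]_m) (L : 'M[V]_(n, m) -> 'M[W]_(n, m)) : Prop :=
  [/\ (forall b1 b2, L (b1 + b2) = L b1 + L b2),
      (forall (l : R[i]) b, L (mxscale l b) = mxscale l (L b)) &
      (forall b, D (n + m)%N (block_mx a b 0 c) ->
         f (n + m)%N (block_mx a b 0 c) = block_mx (f n a) (L b) 0 (f m c))].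

Definition Delta (R : realType) (V W : lmodType R[i])
  (D : forall n, set 'M[V]_n) (f : forall n, 'M[V]_n -> 'M[W]_n)
  n m (a : 'M[V]_n) (c : 'M[V]_m) : 'M[V]_(n, m) -> 'M[W]_(n, m) :=
  epsilon (inhabits (fun _ => 0)) (is_Delta D f a c).

Definition einv (R : realType) (x : \bar R) : \bar R :=
  match x with
  | EFin r => if r == 0 then +oo%E else (r^-1)%:E
  | +oo%E => 0%E
  | -oo%E => 0%E
  end.

Definition delta (R : realType) (V : lmodType R[i])
  (D : forall n, set 'M[V]_n) n m (a : 'M[V]_n) (c : 'M[V]_m)
  (b : 'M[V]_(n, m)) : \bar R :=
  einv (ereal_sup [set t : \bar R | (0 <= t)%E /\
     forall s : R, 0 <= s -> (s%:E <= t)%E ->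
       D (n + m)%N (block_mx a (mxscale (s%:C)%C b) 0 c)]).

(* The upper-right corner of f [a b; 0 c] is controlled by intertwinings:
   [1 0] and [0 1] show that f [a b; 0 c] is block upper triangular with
   diagonal f(a), f(c); diag(1, mu) makes the corner homogeneous in b, and
   [1 1] against [a 0 b1; 0 a b2; 0 0 c] makes it additive, whenever the
   block matrices involved lie in D.  As D is finitely open they do for all
   small real multiples of b, so rescaling turns the corner into a linear
   map Delta f(a,c).  Then f [a sb; 0 c] = [f(a) s Delta f(a,c)(b); 0 f(c)],
   every t admissible in the supremum defining delta_D(a,c)(b) is admissible
   for delta_E, and taking reciprocals reverses the inequality. *)
From HB Require Import structures.
From mathcomp Require Import all_boot all_order all_algebra.
From mathcomp Require Import boolp classical_sets reals constructive_ereal ereal.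
From mathcomp Require Import complex.
From Stdlib Require Import ClassicalEpsilon.

Set Implicit Arguments.
Unset Strict Implicit.
Unset Printing Implicit Defensive.

Import Order.TTheory GRing.Theory Num.Theory.
Local Open Scope ring_scope.

Section ScalarMatrixAction.
Variables (R : realType) (V : lmodType R[i]).

Lemma smx_row_col p q1 q2 r (P : 'M[R[i]]_(p, q1)) (Q : 'M[R[i]]_(p, q2))
    (y : 'M[V]_(q1, r)) (z : 'M[V]_(q2, r)) :
  smx (row_mx P Q) (col_mx y z) = smx P y + smx Q z.
Proof.
apply/matrixP=> i j; rewrite !mxE big_split_ord /=.
by congr (_ + _); apply: eq_bigr => k _;
  rewrite ?row_mxEl ?col_mxEu ?row_mxEr ?col_mxEd.
Qed.

Lemma mxs_row_col p q1 q2 r (x : 'M[V]_(p, q1)) (y : 'M[V]_(p, q2))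
    (P : 'M[R[i]]_(q1, r)) (Q : 'M[R[i]]_(q2, r)) :
  mxs (row_mx x y) (col_mx P Q) = mxs x P + mxs y Q.
Proof.
apply/matrixP=> i j; rewrite !mxE big_split_ord /=.
by congr (_ + _); apply: eq_bigr => k _;
  rewrite ?row_mxEl ?col_mxEu ?row_mxEr ?col_mxEd.
Qed.

Lemma smx_col_mx p1 p2 q r (P : 'M[R[i]]_(p1, q)) (Q : 'M[R[i]]_(p2, q))
    (y : 'M[V]_(q, r)) :
  smx (col_mx P Q) y = col_mx (smx P y) (smx Q y).
Proof.
apply/eqP; rewrite -[X in X == _]vsubmxK; apply/eqP; congr col_mx;
  apply/matrixP=> i j; rewrite !mxE; apply: eq_bigr => l _;
  by rewrite ?col_mxEu ?col_mxEd ?mxE ?col_mxEu ?col_mxEd.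
Qed.

Lemma mxs_col_mx p1 p2 q r (x : 'M[V]_(p1, q)) (y : 'M[V]_(p2, q))
    (P : 'M[R[i]]_(q, r)) :
  mxs (col_mx x y) P = col_mx (mxs x P) (mxs y P).
Proof.
apply/eqP; rewrite -[X in X == _]vsubmxK; apply/eqP; congr col_mx;
  apply/matrixP=> i j; rewrite !mxE; apply: eq_bigr => l _;
  by rewrite ?col_mxEu ?col_mxEd ?mxE ?col_mxEu ?col_mxEd.
Qed.

Lemma smx_mx_row p q r1 r2 (P : 'M[R[i]]_(p, q))
    (y : 'M[V]_(q, r1)) (z : 'M[V]_(q, r2)) :
  smx P (row_mx y z) = row_mx (smx P y) (smx P z).
Proof.
apply/eqP; rewrite -[X in X == _]hsubmxK; apply/eqP; congr row_mx;
  apply/matrixP=> i j; rewrite !mxE; apply: eq_bigr => l _;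
  by rewrite ?row_mxEl ?row_mxEr ?mxE ?row_mxEl ?row_mxEr.
Qed.

Lemma mxs_mx_row p q r1 r2 (x : 'M[V]_(p, q))
    (P : 'M[R[i]]_(q, r1)) (Q : 'M[R[i]]_(q, r2)) :
  mxs x (row_mx P Q) = row_mx (mxs x P) (mxs x Q).
Proof.
apply/eqP; rewrite -[X in X == _]hsubmxK; apply/eqP; congr row_mx;
  apply/matrixP=> i j; rewrite !mxE; apply: eq_bigr => l _;
  by rewrite ?row_mxEl ?row_mxEr ?mxE ?row_mxEl ?row_mxEr.
Qed.

Lemma smx_block p1 p2 q1 q2 r1 r2 (P : 'M[R[i]]_(p1, q1))
    (Q : 'M[R[i]]_(p1, q2)) (P' : 'M[R[i]]_(p2, q1)) (Q' : 'M[R[i]]_(p2, q2))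
    (A : 'M[V]_(q1, r1)) (B : 'M[V]_(q1, r2))
    (C : 'M[V]_(q2, r1)) (D : 'M[V]_(q2, r2)) :
  smx (block_mx P Q P' Q') (block_mx A B C D) =
  block_mx (smx P A + smx Q C) (smx P B + smx Q D)
           (smx P' A + smx Q' C) (smx P' B + smx Q' D).
Proof. by rewrite /block_mx smx_col_mx !smx_row_col !smx_mx_row !add_row_mx. Qed.

Lemma mxs_block p1 p2 q1 q2 r1 r2 (A : 'M[V]_(p1, q1)) (B : 'M[V]_(p1, q2))
    (C : 'M[V]_(p2, q1)) (D : 'M[V]_(p2, q2)) (P : 'M[R[i]]_(q1, r1))
    (Q : 'M[R[i]]_(q1, r2)) (P' : 'M[R[i]]_(q2, r1)) (Q' : 'M[R[i]]_(q2, r2)) :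
  mxs (block_mx A B C D) (block_mx P Q P' Q') =
  block_mx (mxs A P + mxs B P') (mxs A Q + mxs B Q')
           (mxs C P + mxs D P') (mxs C Q + mxs D Q').
Proof. by rewrite /block_mx mxs_col_mx !mxs_row_col !mxs_mx_row !add_row_mx. Qed.

Lemma smx_scalar p r (l : R[i]) (x : 'M[V]_(p, r)) : smx l%:M x = mxscale l x.
Proof.
apply/matrixP=> i j; rewrite !mxE (bigD1 i) //= big1 ?addr0.
  by rewrite mxE eqxx mulr1n.
by move=> k /negbTE ki; rewrite mxE eq_sym ki mulr0n scale0r.
Qed.

Lemma mxs_scalar p r (l : R[i]) (x : 'M[V]_(p, r)) : mxs x l%:M = mxscale l x.
Proof.
apply/matrixP=> i j; rewrite !mxE (bigD1 j) //= big1 ?addr0.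
  by rewrite mxE eqxx mulr1n.
by move=> k /negbTE ki; rewrite mxE ki mulr0n scale0r.
Qed.

Lemma mxscale1 p q (x : 'M[V]_(p, q)) : mxscale 1 x = x.
Proof. by apply/matrixP=> i j; rewrite mxE scale1r. Qed.

Lemma smx1 p r (x : 'M[V]_(p, r)) : smx 1%:M x = x.
Proof. by rewrite smx_scalar mxscale1. Qed.

Lemma mxs1 p r (x : 'M[V]_(p, r)) : mxs x 1%:M = x.
Proof. by rewrite mxs_scalar mxscale1. Qed.

Lemma smx0l p q r (x : 'M[V]_(q, r)) : smx (0 : 'M[R[i]]_(p, q)) x = 0.
Proof. by apply/matrixP=> i j; rewrite !mxE big1 // => k _; rewrite mxE scale0r. Qed.

Lemma smx0r p q r (S : 'M[R[i]]_(p, q)) : smx S (0 : 'M[V]_(q, r)) = 0.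
Proof. by apply/matrixP=> i j; rewrite !mxE big1 // => k _; rewrite mxE scaler0. Qed.

Lemma mxs0l p q r (S : 'M[R[i]]_(q, r)) : mxs (0 : 'M[V]_(p, q)) S = 0.
Proof. by apply/matrixP=> i j; rewrite !mxE big1 // => k _; rewrite mxE scaler0. Qed.

Lemma mxs0r p q r (x : 'M[V]_(p, q)) : mxs x (0 : 'M[R[i]]_(q, r)) = 0.
Proof. by apply/matrixP=> i j; rewrite !mxE big1 // => k _; rewrite mxE scale0r. Qed.

Lemma mxscale0 p q (x : 'M[V]_(p, q)) : mxscale 0 x = 0.
Proof. by apply/matrixP=> i j; rewrite !mxE scale0r. Qed.

Lemma mxscaler0 p q l : mxscale l (0 : 'M[V]_(p, q)) = 0.
Proof. by apply/matrixP=> i j; rewrite !mxE scaler0. Qed.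

Lemma mxscaleDr p q l (x y : 'M[V]_(p, q)) :
  mxscale l (x + y) = mxscale l x + mxscale l y.
Proof. by apply/matrixP=> i j; rewrite !mxE scalerDr. Qed.

Lemma mxscaleA p q l l' (x : 'M[V]_(p, q)) :
  mxscale l (mxscale l' x) = mxscale (l * l') x.
Proof. by apply/matrixP=> i j; rewrite !mxE scalerA. Qed.

Lemma mxscaleI p q l : l != 0 -> injective (@mxscale R V p q l).
Proof.
by move=> l0 x y /(congr1 (mxscale l^-1)); rewrite !mxscaleA mulVf // !mxscale1.
Qed.

Lemma mxscale_block p1 p2 q1 q2 l (A : 'M[V]_(p1, q1)) (B : 'M[V]_(p1, q2))
    (C : 'M[V]_(p2, q1)) (D : 'M[V]_(p2, q2)) :
  mxscale l (block_mx A B C D) =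
  block_mx (mxscale l A) (mxscale l B) (mxscale l C) (mxscale l D).
Proof. exact: map_block_mx. Qed.

Lemma mxscale_col_mx p1 p2 q l (A : 'M[V]_(p1, q)) (B : 'M[V]_(p2, q)) :
  mxscale l (col_mx A B) = col_mx (mxscale l A) (mxscale l B).
Proof. exact: map_col_mx. Qed.

Lemma block_mx_scale_corner n m (A : 'M[V]_n) (C : 'M[V]_m) l B :
  block_mx A (mxscale l B) 0 C = dsum A C + mxscale l (block_mx 0 B 0 0).
Proof.
by rewrite mxscale_block !mxscaler0 /dsum add_block_mx !addr0 !add0r.
Qed.

End ScalarMatrixAction.

Ltac simp_action := do 4 rewrite ?mxs_col_mx ?mxs_row_col ?smx_col_mx
  ?smx_row_col ?mxs_mx_row ?smx_mx_row ?mxs1 ?smx1 ?mxs0r ?mxs0l ?smx0l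
  ?smx0r ?addr0 ?add0r ?add_row_mx.

Lemma cabs_real (R : realType) (s : R) : 0 <= s -> cabs (s%:C)%C = s.
Proof. by move=> s0; rewrite /cabs /= expr0n /= addr0 sqrtr_sqr ger0_norm. Qed.

Lemma real_complex_neq0 (R : realType) (s : R) : 0 < s -> (s%:C)%C != 0.
Proof. by move=> s0; rewrite (fmorph_eq0 (real_complex R)) gt_eqF. Qed.

Definition near0 (R : realType) (Q : R -> Prop) :=
  exists2 e : R, 0 < e & forall s, 0 < s -> s < e -> Q s.

Lemma near0_and (R : realType) (Q1 Q2 : R -> Prop) :
  near0 Q1 -> near0 Q2 -> near0 (fun s => Q1 s /\ Q2 s).
Proof.
move=> [e1 e10 H1] [e2 e20 H2]; exists (Num.min e1 e2); first by rewrite lt_min e10.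
by move=> s s0; rewrite lt_min => /andP[se1 se2]; split; [exact: H1 | exact: H2].
Qed.

Lemma near0_witness (R : realType) (Q : R -> Prop) :
  near0 Q -> exists2 s, 0 < s & Q s.
Proof.
move=> [e e0 H]; exists (e / 2); first by rewrite divr_gt0.
by apply: H; rewrite ?divr_gt0 // ltr_pdivrMr // ltr_pMr // ltr1n.
Qed.

Lemma finitely_open_radial (R : realType) (V : lmodType R[i])
    (nV : forall n, 'M[V]_n -> R) (D : forall n, set 'M[V]_n) :
  (forall n (l : R[i]) (x : 'M[V]_n), nV n (mxscale l x) = cabs l * nV n x) ->
  finitely_open nV D ->
  forall N (X Y : 'M[V]_N), D N X -> near0 (fun s => D N (X + mxscale (s%:C)%C Y)).
Proof.
move=> nV_scale hDo N X Y DX.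
have span_XY l : span_mx [:: X; Y] (X + mxscale l Y).
  exists [:: 1; l]; split => //.
  by rewrite big_ord_recl big_ord_recl big_ord0 /= addr0 mxscale1.
have span_X : span_mx [:: X; Y] X by have := span_XY 0; rewrite mxscale0 addr0.
have [eps [eps0 Heps]] := hDo N _ _ span_X DX.
have nY0 : 0 < `|nV N Y| + 1 by rewrite ltr_wpDl.
exists (eps / (`|nV N Y| + 1)) => [|s s0]; first by rewrite divr_gt0.
rewrite ltr_pdivlMr // => se; apply: Heps; first exact: span_XY.
rewrite addrC addKr nV_scale cabs_real ?ltW //.
apply: le_lt_trans se; rewrite mulrDr mulr1.
apply: (le_trans (y := s * `|nV N Y|)); last by rewrite lerDl ltW.
by apply: ler_wpM2l; [exact: ltW | exact: ler_norm].
Qed.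

Section LinearExtension.
Variables (R : realType) (V W : lmodType R[i]) (p q : nat).
Variables (P : set 'M[V]_(p, q)) (g : 'M[V]_(p, q) -> 'M[W]_(p, q)).
Hypothesis P_radial : forall b, near0 (fun s => P (mxscale (s%:C)%C b)).
Hypothesis g_homogeneous : forall mu b,
  P b -> P (mxscale mu b) -> g (mxscale mu b) = mxscale mu (g b).
Hypothesis g_additive_near0 : forall b1 b2, near0 (fun s =>
  g (mxscale (s%:C)%C (b1 + b2)) = g (mxscale (s%:C)%C b1) + g (mxscale (s%:C)%C b2)).

Let admissible b (s : R) := 0 < s /\ P (mxscale (s%:C)%C b).

Let scale_of b : R := epsilon (inhabits 1) (admissible b).

Lemma scale_ofP b : admissible b (scale_of b).
Proof.
by apply: epsilon_spec; have [s s0 Ps] := near0_witness (P_radial b); exists s.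
Qed.

Let extension b := mxscale ((scale_of b)^-1%:C)%C (g (mxscale ((scale_of b)%:C)%C b)).

Lemma extension_scale b s : admissible b s ->
  g (mxscale (s%:C)%C b) = mxscale (s%:C)%C (extension b).
Proof.
move=> [s0 Ps]; have [s10 Ps1] := scale_ofP b; set s1 := scale_of b in s10 Ps1 *.
have e : mxscale (s%:C)%C b = mxscale ((s / s1)%:C)%C (mxscale (s1%:C)%C b).
  by rewrite mxscaleA -rmorphM mulfVK // gt_eqF.
by rewrite e g_homogeneous -?e // /extension -/s1 mxscaleA -rmorphM.
Qed.

Lemma extension_homogeneous l b : extension (mxscale l b) = mxscale l (extension b).
Proof.
have [s10 P1] := scale_ofP b; have [s20 P2] := scale_ofP (mxscale l b).
set s1 := scale_of b in s10 P1; set s2 := scale_of (mxscale l b) in s20 P2.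
apply: (mxscaleI (real_complex_neq0 s20)); rewrite -extension_scale //.
set mu := (s2%:C)%C * l / (s1%:C)%C.
have e : mxscale (s2%:C)%C (mxscale l b) = mxscale mu (mxscale (s1%:C)%C b).
  by rewrite !mxscaleA /mu mulfVK // real_complex_neq0.
by rewrite e g_homogeneous -?e // extension_scale // !mxscaleA /mu
  mulfVK ?real_complex_neq0.
Qed.

Lemma extension_additive b1 b2 :
  extension (b1 + b2) = extension b1 + extension b2.
Proof.
have [s s0 [[Pb1 Pb2] [Pb12 gD]]] := near0_witness (near0_and
  (near0_and (P_radial b1) (P_radial b2))
  (near0_and (P_radial (b1 + b2)) (g_additive_near0 b1 b2))).
apply: (mxscaleI (real_complex_neq0 s0)).
by rewrite mxscaleDr -!extension_scale.
Qed.

Lemma extension_eq b : P b -> extension b = g b.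
Proof.
move=> Pb; have := @extension_scale b 1.
by rewrite rmorph1 !mxscale1 => ->; split; rewrite ?ltr01 ?mxscale1.
Qed.

Lemma linear_extension : exists L : 'M[V]_(p, q) -> 'M[W]_(p, q),
  [/\ forall b1 b2, L (b1 + b2) = L b1 + L b2,
      forall l b, L (mxscale l b) = mxscale l (L b) &
      forall b, P b -> L b = g b].
Proof.
by exists extension; split; [exact: extension_additive |
  exact: extension_homogeneous | exact: extension_eq].
Qed.

End LinearExtension.

Unset Implicit Arguments.

Section NcCorner.
Variables (R : realType) (V W : lmodType R[i]).
Variables (D : forall n, set 'M[V]_n) (f : forall n, 'M[V]_n -> 'M[W]_n).
Hypothesis f_intertwines : forall m n (a : 'M[V]_m) (b : 'M[V]_n)
  (S : 'M[R[i]]_(m, n)), D m a -> D n b -> mxs a S = smx S b ->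
  mxs (f m a) S = smx S (f n b).
Variables (n m : nat) (a : 'M[V]_n) (c : 'M[V]_m).
Hypotheses (Da : D n a) (Dc : D m c).

Let X (b : 'M[V]_(n, m)) : 'M[V]_(n + m) := block_mx a b 0 c.
Let corner b := ursubmx (f (n + m)%N (X b)).

Lemma f_block_triangular b : D (n + m)%N (X b) ->
  f _ (X b) = block_mx (f n a) (corner b) 0 (f m c).
Proof.
move=> DX.
have := f_intertwines _ _ _ _ (col_mx 1%:M 0) DX Da.
have := f_intertwines _ _ _ _ (row_mx 0 1%:M) Dc DX.
rewrite /X /block_mx; simp_action => /(_ erefl) h2 /(_ erefl) h1.
move: h2 h1; rewrite -[f _ (col_mx _ _)]submxK /block_mx; simp_action.
by move=> /eq_row_mx [_ ->] /eq_col_mx [-> ->].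
Qed.

Lemma corner_homogeneous mu b : D (n + m)%N (X b) ->
  D (n + m)%N (X (mxscale mu b)) -> corner (mxscale mu b) = mxscale mu (corner b).
Proof.
move=> Db Dmub; set S : 'M[R[i]]_(n + m) := block_mx 1%:M 0 0 mu%:M.
have := f_intertwines _ _ _ _ S Db Dmub.
rewrite /X /S -[f _ (block_mx a _ 0 c)]submxK -[f _ (block_mx a (mxscale _ _) 0 c)]submxK.
rewrite !mxs_block !smx_block; simp_action; rewrite !mxs_scalar !smx_scalar.
by move=> /(_ erefl) /eq_block_mx [_ e _ _]; rewrite /corner /X e.
Qed.

Let Z (b1 b2 : 'M[V]_(n, m)) : 'M[V]_(n + n + m) :=
  block_mx (dsum a a) (col_mx b1 b2) 0 c.

Lemma corner_intertwine (P : 'M[R[i]]_(n, n + n)) b b1 b2 :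
  D (n + m)%N (X b) -> D (n + n + m)%N (Z b1 b2) ->
  mxs a P = smx P (dsum a a) -> b = smx P (col_mx b1 b2) ->
  corner b = smx P (ursubmx (f _ (Z b1 b2))).
Proof.
move=> DX DZ aP bP; set S : 'M[R[i]]_(n + m, n + n + m) := block_mx P 0 0 1%:M.
have := f_intertwines _ _ _ _ S DX DZ.
rewrite /X /Z /S -[f _ (block_mx a _ 0 c)]submxK -[f _ (block_mx (dsum a a) _ 0 c)]submxK.
rewrite !mxs_block !smx_block; simp_action; rewrite aP -bP.
by move=> /(_ erefl) /eq_block_mx [_ e _ _]; rewrite block_mxKur /corner /X e.
Qed.

Lemma corner_additive b1 b2 : D (n + m)%N (X b1) -> D (n + m)%N (X b2) ->
  D (n + m)%N (X (b1 + b2)) -> D (n + n + m)%N (Z b1 b2) ->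
  corner (b1 + b2) = corner b1 + corner b2.
Proof.
move=> D1 D2 D12 DZ; set G := ursubmx (f _ (Z b1 b2)).
have -> : corner (b1 + b2) = smx (row_mx 1%:M 1%:M) G.
  by apply: corner_intertwine => //; rewrite /dsum /block_mx; simp_action.
have -> : corner b1 = smx (row_mx 1%:M 0) G.
  by apply: corner_intertwine => //; rewrite /dsum /block_mx; simp_action.
have -> : corner b2 = smx (row_mx 0 1%:M) G.
  by apply: corner_intertwine => //; rewrite /dsum /block_mx; simp_action.
by rewrite -[G]vsubmxK; simp_action.
Qed.

Variable nV : forall n, 'M[V]_n -> R.
Hypothesis nV_scale :
  forall n (l : R[i]) (x : 'M[V]_n), nV n (mxscale l x) = cabs l * nV n x.
Hypotheses (hDo : finitely_open nV D) (hD : nc_set D).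

Lemma block_radial b : near0 (fun s => D (n + m)%N (X (mxscale (s%:C)%C b))).
Proof.
have [e e0 De] := finitely_open_radial nV_scale hDo (block_mx 0 b 0 0)
  (hD _ _ _ _ Da Dc).
by exists e => // s s0 se; rewrite /X block_mx_scale_corner; apply: De.
Qed.

Lemma dsum_block_radial b1 b2 : near0 (fun s =>
  D (n + n + m)%N (Z (mxscale (s%:C)%C b1) (mxscale (s%:C)%C b2))).
Proof.
have [e e0 De] := finitely_open_radial nV_scale hDo
  (block_mx 0 (col_mx b1 b2) 0 0) (hD _ _ _ _ (hD _ _ _ _ Da Da) Dc).
by exists e => // s s0 se; rewrite /Z -mxscale_col_mx block_mx_scale_corner; apply: De.
Qed.

Lemma corner_additive_near0 b1 b2 : near0 (fun s =>
  corner (mxscale (s%:C)%C (b1 + b2)) =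
  corner (mxscale (s%:C)%C b1) + corner (mxscale (s%:C)%C b2)).
Proof.
have [e e0 De] := near0_and (near0_and (block_radial b1) (block_radial b2))
  (near0_and (block_radial (b1 + b2)) (dsum_block_radial b1 b2)).
exists e => // s s0 se; have [[D1 D2] [D12 DZ]] := De s s0 se.
by rewrite mxscaleDr corner_additive // -mxscaleDr.
Qed.

Lemma Delta_exists : exists L, is_Delta D f a c L.
Proof.
have [L [L_additive L_homogeneous L_corner]] := linear_extension block_radial
  corner_homogeneous corner_additive_near0.
exists L; split => // b Db.
by rewrite f_block_triangular // L_corner.
Qed.

End NcCorner.

Set Implicit Arguments.

Arguments Delta_exists {R V W D f} f_intertwines {n m a c} Da Dc {nV}.

Lemma Delta_spec (R : realType) (V W : lmodType R[i])
    (D : forall n, set 'M[V]_n) (f : forall n, 'M[V]_n -> 'M[W]_n)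
    n m (a : 'M[V]_n) (c : 'M[V]_m) :
  (exists L, is_Delta D f a c L) -> is_Delta D f a c (Delta D f a c).
Proof. by move=> [L HL]; apply: epsilon_spec; exists L. Qed.

Lemma lee_einv (R : realType) (x y : \bar R) :
  (0 <= x)%E -> (x <= y)%E -> (einv y <= einv x)%E.
Proof.
case: x => [r| |] //; case: y => [r'| |] //=; rewrite ?lee_fin.
- move=> r0 rr'; have [_|r_neq0] := eqVneq r 0; first exact: leey.
  have r_gt0 : 0 < r by rewrite lt_def r_neq0 r0.
  have r'_gt0 : 0 < r' by apply: lt_le_trans rr'.
  by rewrite gt_eqF // lee_fin lef_pV2 // posrE.
- by move=> r0 _; case: ifP => // _; rewrite lee_fin invr_ge0.
Qed.

Lemma delta_le_of_blocks (R : realType) (V W : lmodType R[i])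
    (D : forall n, set 'M[V]_n) (E : forall n, set 'M[W]_n)
    n m (a : 'M[V]_n) (c : 'M[V]_m) (b : 'M[V]_(n, m))
    n' m' (a' : 'M[W]_n') (c' : 'M[W]_m') (b' : 'M[W]_(n', m')) :
  D (n + m)%N (dsum a c) ->
  (forall s : R, 0 <= s -> D (n + m)%N (block_mx a (mxscale (s%:C)%C b) 0 c) ->
     E (n' + m')%N (block_mx a' (mxscale (s%:C)%C b') 0 c')) ->
  (delta E a' c' b' <= delta D a c b)%E.
Proof.
move=> Dac DE; apply: lee_einv.
  apply: le_ereal_sup_tmp; exists 0%E => //; split => // s s0 s_le0.
  have -> : s = 0 by apply/le_anti; rewrite s0 -lee_fin s_le0.
  by rewrite mxscale0.
apply: ereal_sup_le => t [t0 Dt]; split => // s s0 st.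
exact: DE (Dt s s0 st).
Qed.

Theorem corollary3p2 (R : realType) (V W : lmodType R[i])
  (nV : forall n, 'M[V]_n -> R) (nW : forall n, 'M[W]_n -> R)
  (hV : is_operator_space nV) (hW : is_operator_space nW)
  (D : forall n, set 'M[V]_n) (E : forall n, set 'M[W]_n)
  (hD : nc_set D) (hDo : finitely_open nV D) (hE : nc_set E)
  (f : forall n, 'M[V]_n -> 'M[W]_n)
  (hf : nc_fun D E f) (hlb : locally_bounded nV nW D f) :
  forall (n m : nat) (a : 'M[V]_n) (c : 'M[V]_m) (b : 'M[V]_(n, m)),
    D n a -> D m c ->
    (delta E (f n a) (f m c) (Delta D f a c b) <= delta D a c b)%E.
Proof.
move=> n m a c b Da Dc; case: hV => _ nV_scale _ _ _.
have [_ Delta_scale Delta_corner] :=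
  Delta_spec (Delta_exists hf.2 Da Dc nV_scale hDo hD).
apply: delta_le_of_blocks => [|s _ Ds]; first exact: hD.
by have := hf.1 _ _ Ds; rewrite Delta_corner // Delta_scale.
Qed.
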